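(* Let $A\in\mathbb{C}^{2n\times 2n}$ be Hamiltonian and let $f:\mathcal{M}\to\mathbb{R}_{\ge0}$, $f(Z)=\|\operatorname{diag}(Z^HAZ)\|_F^2=\sum_{j=1}^{2n}|\langle AZe_j,Ze_j\rangle|^2$, where $\mathcal{M}\subset\mathbb{C}^{2n\times 2n}$ is the manifold of unitary symplectic matrices. Then for every $Z\in\mathcal{M}$, $$\operatorname{grad} f(Z)=ZX$$ for some matrix $X\in\mathbb{C}^{2n\times 2n}$ which is skew-Hermitian and Hamiltonian and has zero diagonal.
   Context: $J=J_{2n}=\begin{bmatrix}0&I_n\\-I_n&0\end{bmatrix}$; $A$ is Hamiltonian if $(JA)^H=JA$; $Z$ is symplectic if $Z^HJZ=J$. $e_j$ is the $j$-th standard basis vector and $\langle u,v\rangle=v^Hu$. $\mathbb{C}^{2n\times 2n}$ is regarded as a real Euclidean space with inner product $\langle X,Y\rangle_{\mathbb{R}}=\operatorname{Re}\operatorname{tr}(X^HY)$. The function $\tilde f(Z)=\sum_j|\langle AZe_j,Ze_j\rangle|^2$ on all of $\mathbb{C}^{2n\times2n}$ is real-differentiable, with Euclidean gradient $\nabla\tilde f(Z)=\big[\partial\tilde f/\partial\operatorname{Re}z_{jk}+\imath\,\partial\tilde f/\partial\operatorname{Im}z_{jk}\big]_{j,k}$; $\operatorname{grad} f(Z)$ denotes the Riemannian gradient of the restriction $f=\tilde f|_{\mathcal{M}}$, i.e. the orthogonal projection (w.r.t. $\langle\cdot,\cdot\rangle_{\mathbb{R}}$) of $\nabla\tilde f(Z)$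 onto the tangent space $T_Z\mathcal{M}=\{ZK:\ K\text{ skew-Hermitian Hamiltonian}\}$. *)

From Stdlib Require Import Reals Arith Bool.
Open Scope R_scope.

Definition C : Type := (R * R)%type.
Definition Cre (z : C) : R := fst z.
Definition Cim (z : C) : R := snd z.
Definition C0 : C := (0, 0).
Definition C1 : C := (1, 0).
Definition Ci : C := (0, 1).
Definition RtoC (r : R) : C := (r, 0).
Definition Cadd (z w : C) : C := (Cre z + Cre w, Cim z + Cim w).
Definition Copp (z : C) : C := (- Cre z, - Cim z).
Definition Cmul (z w : C) : C :=
  (Cre z * Cre w - Cim z * Cim w, Cre z * Cim w + Cim z * Cre w).
Definition Cconj (z : C) : C := (Cre z, - Cim z).
Definition Cnorm2 (z : C) : R := Cre z * Cre z + Cim z * Cim z.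

Fixpoint csum (m : nat) (f : nat -> C) : C :=
  match m with O => C0 | S m' => Cadd (csum m' f) (f m') end.
Fixpoint rsum (m : nat) (f : nat -> R) : R :=
  match m with O => 0 | S m' => rsum m' f + f m' end.

(** Matrices / vectors indexed by nat; only indices < N (= 2n) are meaningful. *)
Definition Mat : Type := nat -> nat -> C.
Definition Vec : Type := nat -> C.

Definition mmul (N : nat) (A B : Mat) : Mat :=
  fun i j => csum N (fun k => Cmul (A i k) (B k j)).
Definition madd (A B : Mat) : Mat := fun i j => Cadd (A i j) (B i j).
Definition mopp (A : Mat) : Mat := fun i j => Copp (A i j).
Definition mscale (c : C) (A : Mat) : Mat := fun i j => Cmul c (A i j).
Definition adj (A : Mat) : Mat := fun i j => Cconj (A j i).
Definition Idm : Mat := fun i j => if Nat.eqb i j then C1 else C0.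
Definition mtrace (N : nat) (A : Mat) : C := csum N (fun i => A i i).
Definition matvec (N : nat) (A : Mat) (x : Vec) : Vec :=
  fun i => csum N (fun k => Cmul (A i k) (x k)).
Definition evec (j : nat) : Vec := fun i => if Nat.eqb i j then C1 else C0.
Definition Ejk (j k : nat) : Mat :=
  fun a b => if Nat.eqb a j && Nat.eqb b k then C1 else C0.

Definition meq (N : nat) (A B : Mat) : Prop :=
  forall i j, (i < N)%nat -> (j < N)%nat -> A i j = B i j.

(** J_{2n} = [[0, I_n], [-I_n, 0]] *)
Definition Jmat (n : nat) : Mat := fun i j =>
  if Nat.ltb i n && Nat.eqb j (i + n) then C1
  else if Nat.leb n i && Nat.ltb i (2 * n) && Nat.eqb (j + n) i then Copp C1
  else C0.

Definition Hamiltonian (n : nat) (A : Mat) : Prop :=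
  meq (2 * n) (adj (mmul (2 * n) (Jmat n) A)) (mmul (2 * n) (Jmat n) A).
Definition symplectic (n : nat) (Z : Mat) : Prop :=
  meq (2 * n) (mmul (2 * n) (mmul (2 * n) (adj Z) (Jmat n)) Z) (Jmat n).
Definition unitary (n : nat) (Z : Mat) : Prop :=
  meq (2 * n) (mmul (2 * n) (adj Z) Z) Idm.
Definition skew_Hermitian (n : nat) (K : Mat) : Prop :=
  meq (2 * n) (adj K) (mopp K).
Definition in_M (n : nat) (Z : Mat) : Prop := unitary n Z /\ symplectic n Z.

Definition cinner (N : nat) (u v : Vec) : C :=
  csum N (fun i => Cmul (Cconj (v i)) (u i)).

Definition ftilde (n : nat) (A Z : Mat) : R :=
  let N := (2 * n)%nat in
  rsum N (fun j =>
    Cnorm2 (cinner N (matvec N A (matvec N Z (evec j))) (matvec N Z (evec j)))).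

Definition inner_R (N : nat) (X Y : Mat) : R := Cre (mtrace N (mmul N (adj X) Y)).

Definition is_euclid_grad (n : nat) (A Z G : Mat) : Prop :=
  forall j k, (j < 2 * n)%nat -> (k < 2 * n)%nat ->
    derivable_pt_lim (fun t => ftilde n A (madd Z (mscale (RtoC t) (Ejk j k))))
                     0 (Cre (G j k)) /\
    derivable_pt_lim (fun t => ftilde n A (madd Z (mscale (Cmul Ci (RtoC t)) (Ejk j k))))
                     0 (Cim (G j k)).

Definition in_tangent (n : nat) (Z P : Mat) : Prop :=
  exists K, skew_Hermitian n K /\ Hamiltonian n K /\ meq (2 * n) P (mmul (2 * n) Z K).

(** P = grad f(Z): the orthogonal projection (w.r.t. <.,.>_R) of the
    Euclidean gradient onto T_Z M. *)
Definition is_riem_grad (n : nat) (A Z P : Mat) : Prop :=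
  exists G, is_euclid_grad n A Z G /\ in_tangent n Z P /\
    (forall Q, in_tangent n Z Q -> inner_R (2 * n) (madd G (mopp P)) Q = 0).

(* The Riemannian gradient is P = Z K with K skew-Hermitian Hamiltonian, so only the
   diagonal of K is at stake. Skew-Hermitian gives Re K_pp = 0 and Hamiltonian gives
   K_(p+n)(p+n) = -conj K_pp, so it suffices that Im K_pp + Im K_(p+n)(p+n) = 0.
   This is <P, Z D> for the tangent direction Z D, D = diag(i e_p + i e_(p+n)),
   because Z is unitary. Since P is the projection of the Euclidean gradient,
   <P, Z D> is the derivative of f along Z D, which vanishes: Z D only multiplies the
   columns Z e_j by imaginary scalars, i.e. moves them by phases, and each term
   |<A Z e_j, Z e_j>|^2 is phase invariant. *)

From Pilot Require Import Defs.
From Stdlib Require Import Reals Arith Bool Lia Lra.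
Import Defs.
Open Scope R_scope.

Ltac C_ring := unfold Cadd, Cmul, Copp, Cconj, C0, C1, Ci, RtoC, Cre, Cim;
  apply injective_projections; simpl; ring.

Ltac nat_cases := repeat match goal with
  | |- context [Nat.eqb ?a ?b] => destruct (Nat.eqb_spec a b)
  | |- context [Nat.ltb ?a ?b] => destruct (Nat.ltb_spec a b)
  | |- context [Nat.leb ?a ?b] => destruct (Nat.leb_spec a b)
  end.

Lemma csum_ext m f g : (forall k, (k < m)%nat -> f k = g k) -> csum m f = csum m g.
Proof. induction m; intros H; simpl; auto. rewrite IHm, H; auto. Qed.

Lemma rsum_ext m f g : (forall k, (k < m)%nat -> f k = g k) -> rsum m f = rsum m g.
Proof. induction m; intros H; simpl; auto. rewrite IHm, H; auto. Qed.

Lemma csum_add m f g : csum m (fun k => Cadd (f k) (g k)) = Cadd (csum m f) (csum m g).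
Proof. induction m; simpl. C_ring. rewrite IHm. C_ring. Qed.

Lemma csum_mull m c f : csum m (fun k => Cmul c (f k)) = Cmul c (csum m f).
Proof. induction m; simpl. C_ring. rewrite IHm. C_ring. Qed.

Lemma csum_mulr m c f : csum m (fun k => Cmul (f k) c) = Cmul (csum m f) c.
Proof. induction m; simpl. C_ring. rewrite IHm. C_ring. Qed.

Lemma csum_conj m f : csum m (fun k => Cconj (f k)) = Cconj (csum m f).
Proof. induction m; simpl. C_ring. rewrite IHm. C_ring. Qed.

Lemma csum_eq0 m f : (forall k, (k < m)%nat -> f k = C0) -> csum m f = C0.
Proof. induction m; intros H; simpl; auto. rewrite IHm, H; auto. C_ring. Qed.

Lemma rsum_eq0 m f : (forall k, (k < m)%nat -> f k = 0) -> rsum m f = 0.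
Proof. induction m; intros H; simpl; auto. rewrite IHm, H; auto. ring. Qed.

Lemma rsum_sub m f g : rsum m (fun k => f k - g k) = rsum m f - rsum m g.
Proof. induction m; simpl. ring. rewrite IHm. ring. Qed.

Lemma Cre_csum m f : Cre (csum m f) = rsum m (fun k => Cre (f k)).
Proof. induction m; simpl; auto. rewrite <- IHm. reflexivity. Qed.

Lemma csum_delta m f p : (p < m)%nat ->
  (forall k, (k < m)%nat -> k <> p -> f k = C0) -> csum m f = f p.
Proof.
  induction m as [|m' IH]; intros Hp H; [lia|]. simpl.
  destruct (Nat.eq_dec p m') as [->|Hpm].
  - rewrite csum_eq0; [C_ring|]. intros k Hk; apply H; lia.
  - rewrite IH, (H m') by (lia || (intros; apply H; lia)). C_ring.
Qed.

Lemma csum_pair m f p q : (p < m)%nat -> (q < m)%nat -> p <> q ->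
  (forall k, (k < m)%nat -> k <> p -> k <> q -> f k = C0) ->
  csum m f = Cadd (f p) (f q).
Proof.
  intros Hp Hq Hpq H.
  rewrite (csum_ext m f (fun k => Cadd (if Nat.eqb k p then f k else C0)
                                     (if Nat.eqb k q then f k else C0))).
  - rewrite csum_add, (csum_delta m _ p), (csum_delta m _ q); auto;
      intros; nat_cases; try lia; auto.
  - intros k Hk. nat_cases; subst; try lia; rewrite ?H by auto; C_ring.
Qed.

Lemma csum_swap m p F : csum m (fun i => csum p (fun k => F i k)) =
  csum p (fun k => csum m (fun i => F i k)).
Proof.
  induction m; simpl.
  - symmetry. apply csum_eq0. reflexivity.
  - rewrite IHm, <- csum_add. reflexivity.
Qed.

Definition mcol (M : Mat) (j : nat) : Vec := fun i => M i j.

Lemma matvec_ext N M x y i : (forall k, (k < N)%nat -> x k = y k) ->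
  matvec N M x i = matvec N M y i.
Proof. intros H. apply csum_ext. intros k Hk. rewrite H; auto. Qed.

Lemma cinner_ext N u u' v v' : (forall k, (k < N)%nat -> u k = u' k) ->
  (forall k, (k < N)%nat -> v k = v' k) -> cinner N u v = cinner N u' v'.
Proof. intros Hu Hv. apply csum_ext. intros k Hk. rewrite Hu, Hv; auto. Qed.

Lemma matvec_scale N M c x i :
  matvec N M (fun k => Cmul c (x k)) i = Cmul c (matvec N M x i).
Proof. unfold matvec. rewrite <- csum_mull. apply csum_ext; intros; C_ring. Qed.

Lemma cinner_addr N u v v' :
  cinner N u (fun k => Cadd (v k) (v' k)) = Cadd (cinner N u v) (cinner N u v').
Proof. unfold cinner. rewrite <- csum_add. apply csum_ext; intros; C_ring. Qed.

Lemma cinner_scalel N c u v : cinner N (fun k => Cmul c (u k)) v = Cmul c (cinner N u v).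
Proof. unfold cinner. rewrite <- csum_mull. apply csum_ext; intros; C_ring. Qed.

Lemma cinner_scaler N c u v :
  cinner N u (fun k => Cmul c (v k)) = Cmul (Cconj c) (cinner N u v).
Proof. unfold cinner. rewrite <- csum_mull. apply csum_ext; intros; C_ring. Qed.

Lemma cinner_conj N u v : cinner N u v = Cconj (cinner N v u).
Proof. unfold cinner. rewrite <- csum_conj. apply csum_ext. intros. C_ring. Qed.

Lemma matvec_evec N M j i : (j < N)%nat -> matvec N M (evec j) i = M i j.
Proof.
  intros Hj. unfold matvec. rewrite (csum_delta N _ j Hj).
  - unfold evec. rewrite Nat.eqb_refl. C_ring.
  - intros k _ Hkj. unfold evec. destruct (Nat.eqb_spec k j); [lia|C_ring].
Qed.

Lemma matvec_mmul N A B x i :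
  matvec N (mmul N A B) x i = matvec N A (matvec N B x) i.
Proof.
  unfold matvec, mmul.
  rewrite (csum_ext N _ (fun k => csum N (fun l => Cmul (A i l) (Cmul (B l k) (x k)))))
    by (intros; rewrite <- csum_mulr; apply csum_ext; intros; C_ring).
  rewrite csum_swap. apply csum_ext. intros. rewrite csum_mull. reflexivity.
Qed.

Lemma cinner_matvec_adj N M u v :
  cinner N (matvec N M u) v = cinner N u (matvec N (adj M) v).
Proof.
  unfold cinner, matvec, adj.
  rewrite (csum_ext N _
    (fun i => csum N (fun k => Cmul (Cconj (v i)) (Cmul (M i k) (u k)))))
    by (intros; rewrite csum_mull; reflexivity).
  rewrite csum_swap. apply csum_ext. intros k _.
  rewrite <- csum_conj, <- csum_mulr. apply csum_ext. intros. C_ring.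
Qed.

Lemma cinner_unitary n Z u v : unitary n Z ->
  cinner (2 * n) (matvec (2 * n) Z u) (matvec (2 * n) Z v) = cinner (2 * n) u v.
Proof.
  intros HZ. rewrite cinner_matvec_adj. apply cinner_ext; [reflexivity|].
  intros k Hk. rewrite <- matvec_mmul. unfold matvec.
  rewrite (csum_ext _ _ (fun l => Cmul (Idm k l) (v l))) by (intros; rewrite HZ; auto).
  rewrite (csum_delta _ _ k Hk).
  - unfold Idm. rewrite Nat.eqb_refl. C_ring.
  - intros l _ Hlk. unfold Idm. destruct (Nat.eqb_spec k l); [lia|C_ring].
Qed.

Lemma inner_R_cols N X Y :
  inner_R N X Y = Cre (csum N (fun i => cinner N (mcol Y i) (mcol X i))).
Proof. reflexivity. Qed.

Lemma inner_R_ext N X X' Y : meq N X X' -> inner_R N X Y = inner_R N X' Y.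
Proof.
  intros H. rewrite !inner_R_cols. f_equal. apply csum_ext. intros i Hi.
  apply cinner_ext; [reflexivity|]. intros k Hk. apply H; auto.
Qed.

Lemma inner_R_sub N X X' Y :
  inner_R N (madd X (mopp X')) Y = inner_R N X Y - inner_R N X' Y.
Proof.
  unfold inner_R, mtrace, mmul. rewrite !Cre_csum, <- rsum_sub.
  apply rsum_ext. intros i _. rewrite !Cre_csum, <- rsum_sub.
  apply rsum_ext. intros k _. unfold adj, madd, mopp, Cadd, Copp, Cmul, Cconj, Cre, Cim.
  simpl. ring.
Qed.

Lemma inner_R_unitary n Z X Y : unitary n Z ->
  inner_R (2 * n) (mmul (2 * n) Z X) (mmul (2 * n) Z Y) = inner_R (2 * n) X Y.
Proof.
  intros HZ. rewrite !inner_R_cols. f_equal. apply csum_ext. intros i _.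
  exact (cinner_unitary n Z (mcol Y i) (mcol X i) HZ).
Qed.

Lemma mmul_Jmat_l n K a b : (a < 2 * n)%nat ->
  mmul (2 * n) (Jmat n) K a b =
    if Nat.ltb a n then K (a + n)%nat b else Copp (K (a - n)%nat b).
Proof.
  intros Ha. unfold mmul. destruct (Nat.ltb_spec a n).
  - rewrite (csum_delta _ _ (a + n)%nat) by
      (lia || (intros k Hk Hkn; unfold Jmat; nat_cases; try lia; simpl; C_ring)).
    unfold Jmat. nat_cases; try lia. simpl. C_ring.
  - rewrite (csum_delta _ _ (a - n)%nat) by
      (lia || (intros k Hk Hkn; unfold Jmat; nat_cases; try lia; simpl; C_ring)).
    unfold Jmat. nat_cases; try lia. simpl. C_ring.
Qed.

(** * Derivatives at 0 of complex functions of a real variable *)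

Definition is_cderiv0 (f : R -> C) (u d : C) : Prop :=
  f 0 = u /\ derivable_pt_lim (fun t => Cre (f t)) 0 (Cre d) /\
  derivable_pt_lim (fun t => Cim (f t)) 0 (Cim d).

Lemma derivable_pt_lim_eq f x l l' :
  derivable_pt_lim f x l -> l = l' -> derivable_pt_lim f x l'.
Proof. intros H <-. exact H. Qed.

Lemma is_cderiv0_eq f u d u' d' :
  is_cderiv0 f u d -> u = u' -> d = d' -> is_cderiv0 f u' d'.
Proof. intros H <- <-. exact H. Qed.

Lemma is_cderiv0_const c : is_cderiv0 (fun _ => c) c C0.
Proof. split; [reflexivity|split]; apply derivable_pt_lim_const. Qed.

Lemma is_cderiv0_RtoC : is_cderiv0 RtoC C0 C1.
Proof.
  split; [reflexivity|split]; [apply derivable_pt_lim_id|apply derivable_pt_lim_const].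
Qed.

Lemma is_cderiv0_add f g u v du dv : is_cderiv0 f u du -> is_cderiv0 g v dv ->
  is_cderiv0 (fun t => Cadd (f t) (g t)) (Cadd u v) (Cadd du dv).
Proof.
  intros [<- [F1 F2]] [<- [G1 G2]]. split; [reflexivity|split].
  - exact (derivable_pt_lim_plus _ _ _ _ _ F1 G1).
  - exact (derivable_pt_lim_plus _ _ _ _ _ F2 G2).
Qed.

Lemma is_cderiv0_mul f g u v du dv : is_cderiv0 f u du -> is_cderiv0 g v dv ->
  is_cderiv0 (fun t => Cmul (f t) (g t)) (Cmul u v) (Cadd (Cmul du v) (Cmul u dv)).
Proof.
  intros [<- [F1 F2]] [<- [G1 G2]]. split; [reflexivity|split].
  - eapply derivable_pt_lim_eq.
    + exact (derivable_pt_lim_minus _ _ _ _ _ (derivable_pt_lim_mult _ _ _ _ _ F1 G1)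
               (derivable_pt_lim_mult _ _ _ _ _ F2 G2)).
    + unfold Cadd, Cmul, Cre, Cim. simpl. ring.
  - eapply derivable_pt_lim_eq.
    + exact (derivable_pt_lim_plus _ _ _ _ _ (derivable_pt_lim_mult _ _ _ _ _ F1 G2)
               (derivable_pt_lim_mult _ _ _ _ _ F2 G1)).
    + unfold Cadd, Cmul, Cre, Cim. simpl. ring.
Qed.

Lemma is_cderiv0_conj f u du : is_cderiv0 f u du ->
  is_cderiv0 (fun t => Cconj (f t)) (Cconj u) (Cconj du).
Proof.
  intros [<- [F1 F2]]. split; [reflexivity|split]; [exact F1|].
  exact (derivable_pt_lim_opp _ _ _ F2).
Qed.

Lemma is_cderiv0_csum m (F : R -> nat -> C) F0 dF :
  (forall k, (k < m)%nat -> is_cderiv0 (fun t => F t k) (F0 k) (dF k)) ->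
  is_cderiv0 (fun t => csum m (F t)) (csum m F0) (csum m dF).
Proof.
  induction m; intros H; simpl.
  - apply is_cderiv0_const.
  - apply is_cderiv0_add; [apply IHm; intros k Hk|]; apply H; lia.
Qed.

Lemma is_cderiv0_matvec N M (x : R -> Vec) x0 dx i :
  (forall k, (k < N)%nat -> is_cderiv0 (fun t => x t k) (x0 k) (dx k)) ->
  is_cderiv0 (fun t => matvec N M (x t) i) (matvec N M x0 i) (matvec N M dx i).
Proof.
  intros H. eapply is_cderiv0_eq.
  - apply (is_cderiv0_csum N (fun t k => Cmul (M i k) (x t k))).
    intros k Hk. apply is_cderiv0_mul; [apply is_cderiv0_const|auto].
  - reflexivity.
  - apply csum_ext. intros. C_ring.
Qed.

Lemma is_cderiv0_cinner N (x y : R -> Vec) x0 y0 dx dy :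
  (forall k, (k < N)%nat -> is_cderiv0 (fun t => x t k) (x0 k) (dx k)) ->
  (forall k, (k < N)%nat -> is_cderiv0 (fun t => y t k) (y0 k) (dy k)) ->
  is_cderiv0 (fun t => cinner N (x t) (y t)) (cinner N x0 y0)
    (Cadd (cinner N dx y0) (cinner N x0 dy)).
Proof.
  intros Hx Hy. eapply is_cderiv0_eq.
  - apply (is_cderiv0_csum N (fun t k => Cmul (Cconj (y t k)) (x t k))).
    intros k Hk. apply is_cderiv0_mul; [apply is_cderiv0_conj|]; auto.
  - reflexivity.
  - unfold cinner. rewrite <- csum_add. apply csum_ext. intros. C_ring.
Qed.

Lemma derivable_pt_lim_rsum m (F : R -> nat -> R) dF :
  (forall k, (k < m)%nat -> derivable_pt_lim (fun t => F t k) 0 (dF k)) ->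
  derivable_pt_lim (fun t => rsum m (F t)) 0 (rsum m dF).
Proof.
  induction m; intros H; simpl; [apply derivable_pt_lim_const|].
  apply derivable_pt_lim_plus; [apply IHm; intros k Hk|]; apply H; lia.
Qed.

Lemma derivable_pt_lim_Cnorm2 f u d : is_cderiv0 f u d ->
  derivable_pt_lim (fun t => Cnorm2 (f t)) 0 (2 * Cre (Cmul (Cconj u) d)).
Proof.
  intros [<- [F1 F2]]. eapply derivable_pt_lim_eq.
  - exact (derivable_pt_lim_plus _ _ _ _ _ (derivable_pt_lim_mult _ _ _ _ _ F1 F1)
             (derivable_pt_lim_mult _ _ _ _ _ F2 F2)).
  - unfold Cmul, Cconj, Cre, Cim. simpl. ring.
Qed.

(** * The Euclidean gradient of ftilde *)

Definition rayleigh N (A : Mat) (z : Vec) : C := cinner N (matvec N A z) z.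

Definition drayleigh N (A : Mat) (z e : Vec) : C :=
  Cadd (cinner N (matvec N A e) z) (cinner N (matvec N A z) e).

Definition dftilde N (A Z E : Mat) : R :=
  rsum N (fun j =>
    2 * Cre (Cmul (Cconj (rayleigh N A (mcol Z j))) (drayleigh N A (mcol Z j) (mcol E j)))).

Definition euclid_grad N (A Z : Mat) : Mat := fun i j =>
  Cmul (RtoC 2)
    (Cadd (Cmul (rayleigh N A (mcol Z j)) (matvec N (adj A) (mcol Z j) i))
          (Cmul (Cconj (rayleigh N A (mcol Z j))) (matvec N A (mcol Z j) i))).

Lemma ftilde_cols n A Z :
  ftilde n A Z = rsum (2 * n) (fun j => Cnorm2 (rayleigh (2 * n) A (mcol Z j))).
Proof.
  apply rsum_ext. intros j Hj. unfold rayleigh, mcol. f_equal.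
  apply cinner_ext; intros k Hk; [apply matvec_ext; intros|]; apply matvec_evec; auto.
Qed.

Lemma derivable_pt_lim_ftilde n A (Zt : R -> Mat) Z E :
  (forall a b, (a < 2 * n)%nat -> (b < 2 * n)%nat ->
     is_cderiv0 (fun t => Zt t a b) (Z a b) (E a b)) ->
  derivable_pt_lim (fun t => ftilde n A (Zt t)) 0 (dftilde (2 * n) A Z E).
Proof.
  intros H.
  apply (derivable_pt_lim_ext
    (fun t => rsum (2 * n) (fun j => Cnorm2 (rayleigh (2 * n) A (mcol (Zt t) j)))));
    [intros; symmetry; apply ftilde_cols|].
  apply derivable_pt_lim_rsum. intros j Hj. apply derivable_pt_lim_Cnorm2.
  apply is_cderiv0_cinner; intros k Hk; [apply is_cderiv0_matvec; intros|]; apply H; auto.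
Qed.

Lemma dftilde_inner_R N A Z E : dftilde N A Z E = inner_R N (euclid_grad N A Z) E.
Proof.
  rewrite inner_R_cols, Cre_csum. apply rsum_ext. intros j _.
  change (mcol (euclid_grad N A Z) j) with (fun i => euclid_grad N A Z i j).
  unfold euclid_grad, drayleigh. fold (mcol E j).
  rewrite cinner_scaler, cinner_addr, !cinner_scaler, cinner_matvec_adj,
    (cinner_conj N (matvec N A (mcol Z j))).
  unfold Cmul, Cadd, Cconj, RtoC, Cre, Cim. simpl. ring.
Qed.

Lemma inner_R_mscale_Ejk N X c a b : (a < N)%nat -> (b < N)%nat ->
  inner_R N X (mscale c (Ejk a b)) = Cre (Cmul (Cconj (X a b)) c).
Proof.
  intros Ha Hb. rewrite inner_R_cols. f_equal.
  rewrite (csum_delta N _ b Hb).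
  - unfold cinner. rewrite (csum_delta N _ a Ha).
    + unfold mcol, mscale, Ejk. rewrite !Nat.eqb_refl. simpl. C_ring.
    + intros k _ Hka. unfold mcol, mscale, Ejk. destruct (Nat.eqb_spec k a); [lia|].
      simpl. C_ring.
  - intros i _ Hib. apply csum_eq0. intros k _. unfold mcol, mscale, Ejk.
    destruct (Nat.eqb_spec i b); [lia|]. rewrite andb_false_r. C_ring.
Qed.

Lemma is_cderiv0_line (s : R -> C) ds (Z E : Mat) a b : is_cderiv0 s C0 ds ->
  is_cderiv0 (fun t => madd Z (mscale (s t) E) a b) (Z a b) (mscale ds E a b).
Proof.
  intros Hs. eapply is_cderiv0_eq.
  - apply (is_cderiv0_add (fun _ => Z a b));
      [apply is_cderiv0_const|apply is_cderiv0_mul; [exact Hs|apply is_cderiv0_const]].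
  - C_ring.
  - unfold mscale. C_ring.
Qed.

Lemma is_euclid_grad_eq n A Z G :
  is_euclid_grad n A Z G -> meq (2 * n) G (euclid_grad (2 * n) A Z).
Proof.
  intros HG a b Ha Hb. destruct (HG a b Ha Hb) as [Hre Him].
  assert (Hdir : forall (s : R -> C) ds, is_cderiv0 s C0 ds ->
    derivable_pt_lim (fun t => ftilde n A (madd Z (mscale (s t) (Ejk a b)))) 0
      (Cre (Cmul (Cconj (euclid_grad (2 * n) A Z a b)) ds))).
  { intros s ds Hs. rewrite <- (inner_R_mscale_Ejk (2 * n)), <- dftilde_inner_R by auto.
    apply derivable_pt_lim_ftilde. intros. apply is_cderiv0_line, Hs. }
  apply injective_projections.
  - change (Cre (G a b) = Cre (euclid_grad (2 * n) A Z a b)).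
    rewrite (uniqueness_limite _ _ _ _ Hre (Hdir RtoC C1 is_cderiv0_RtoC)).
    unfold Cmul, Cconj, C1, Cre, Cim. simpl. ring.
  - change (Cim (G a b) = Cim (euclid_grad (2 * n) A Z a b)).
    assert (Hi : is_cderiv0 (fun t => Cmul Ci (RtoC t)) C0 Ci).
    { eapply is_cderiv0_eq;
        [apply is_cderiv0_mul; [apply is_cderiv0_const|apply is_cderiv0_RtoC]|..];
        C_ring. }
    rewrite (uniqueness_limite _ _ _ _ Him (Hdir _ _ Hi)).
    unfold Cmul, Cconj, Ci, Cre, Cim. simpl. ring.
Qed.

Lemma inner_R_is_euclid_grad n A Z G W : is_euclid_grad n A Z G ->
  inner_R (2 * n) G W = dftilde (2 * n) A Z W.
Proof.
  intros HG. rewrite dftilde_inner_R. apply inner_R_ext, is_euclid_grad_eq, HG.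
Qed.

(** * Imaginary diagonal tangent directions *)

Definition diag_mx (s : Vec) : Mat := fun a b => if Nat.eqb a b then s a else C0.

Lemma mmul_diag_mx N M s i j : (j < N)%nat -> mmul N M (diag_mx s) i j = Cmul (M i j) (s j).
Proof.
  intros Hj. unfold mmul. rewrite (csum_delta N _ j Hj).
  - unfold diag_mx. rewrite Nat.eqb_refl. reflexivity.
  - intros k _ Hkj. unfold diag_mx. destruct (Nat.eqb_spec k j); [lia|C_ring].
Qed.

Lemma inner_R_diag_mx N K s :
  inner_R N K (diag_mx s) = Cre (csum N (fun i => Cmul (Cconj (K i i)) (s i))).
Proof.
  rewrite inner_R_cols. f_equal. apply csum_ext. intros i Hi.
  unfold cinner, mcol. rewrite (csum_delta N _ i Hi).
  - unfold diag_mx. rewrite Nat.eqb_refl. reflexivity.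
  - intros k _ Hki. unfold diag_mx. destruct (Nat.eqb_spec k i); [lia|C_ring].
Qed.

Lemma drayleigh_ext N A z e e' : (forall k, (k < N)%nat -> e k = e' k) ->
  drayleigh N A z e = drayleigh N A z e'.
Proof.
  intros H. unfold drayleigh. f_equal; apply cinner_ext; auto; try reflexivity.
  intros. apply matvec_ext, H.
Qed.

Lemma drayleigh_phase N A z s :
  drayleigh N A z (fun k => Cmul s (z k)) = Cmul (Cadd s (Cconj s)) (rayleigh N A z).
Proof.
  unfold drayleigh, rayleigh.
  rewrite (cinner_ext N _ (fun i => Cmul s (matvec N A z i)) z z)
    by (intros; try apply matvec_scale; reflexivity).
  rewrite cinner_scalel, cinner_scaler. C_ring.
Qed.

Lemma dftilde_mmul_diag_mx N A Z s : (forall j, (j < N)%nat -> Cre (s j) = 0) ->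
  dftilde N A Z (mmul N Z (diag_mx s)) = 0.
Proof.
  intros Hs. apply rsum_eq0. intros j Hj.
  rewrite (drayleigh_ext N A _ _ (fun k => Cmul (s j) (mcol Z j k)))
    by (intros; unfold mcol; rewrite mmul_diag_mx by auto; C_ring).
  rewrite drayleigh_phase.
  assert (Hre : Cadd (s j) (Cconj (s j)) = C0).
  { specialize (Hs j Hj). destruct (s j) as [x y]. unfold Cre in Hs; simpl in Hs.
    subst. C_ring. }
  rewrite Hre. unfold Cmul, Cconj, C0, Cre, Cim. simpl. ring.
Qed.

Lemma diag_mx_skew_Hermitian n s :
  (forall a, (a < 2 * n)%nat -> Cconj (s a) = Copp (s a)) -> skew_Hermitian n (diag_mx s).
Proof.
  intros Hs a b Ha Hb. unfold adj, mopp, diag_mx.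
  destruct (Nat.eqb_spec b a), (Nat.eqb_spec a b); subst; try lia; auto. C_ring.
Qed.

Lemma diag_mx_Hamiltonian n s :
  (forall a, (a < n)%nat -> s (a + n)%nat = Copp (Cconj (s a))) ->
  Hamiltonian n (diag_mx s).
Proof.
  intros Hs a b Ha Hb. unfold adj. rewrite !mmul_Jmat_l by auto. unfold diag_mx.
  nat_cases; try lia; try C_ring.
  - subst a. rewrite Nat.add_sub, Hs by lia. C_ring.
  - subst b. rewrite Nat.add_sub, Hs by lia. C_ring.
Qed.

Lemma riem_grad_orth_diag n A Z P G K s : unitary n Z -> is_euclid_grad n A Z G ->
  meq (2 * n) P (mmul (2 * n) Z K) ->
  (forall Q, in_tangent n Z Q -> inner_R (2 * n) (madd G (mopp P)) Q = 0) ->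
  (forall a, (a < 2 * n)%nat -> Cconj (s a) = Copp (s a)) ->
  (forall a, (a < n)%nat -> s (a + n)%nat = Copp (Cconj (s a))) ->
  Cre (csum (2 * n) (fun i => Cmul (Cconj (K i i)) (s i))) = 0.
Proof.
  intros HZ HG HPK Horth Hskew Hham.
  assert (HD : in_tangent n Z (mmul (2 * n) Z (diag_mx s))).
  { exists (diag_mx s).
    split; [apply diag_mx_skew_Hermitian|split; [apply diag_mx_Hamiltonian|]]; auto.
    intros a b _ _. reflexivity. }
  assert (Hphase : dftilde (2 * n) A Z (mmul (2 * n) Z (diag_mx s)) = 0).
  { apply dftilde_mmul_diag_mx. intros j Hj. specialize (Hskew j Hj).
    destruct (s j) as [x y]. injection Hskew. unfold Cre. simpl. lra. }
  specialize (Horth _ HD).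
  rewrite inner_R_sub, (inner_R_is_euclid_grad n A Z G) in Horth by auto.
  rewrite Hphase, (inner_R_ext _ P _ _ HPK),
    inner_R_unitary, inner_R_diag_mx in Horth by auto.
  lra.
Qed.

Definition phase_pair (n p : nat) : Vec :=
  fun a => if Nat.eqb a p || Nat.eqb a (p + n) then Ci else C0.

Lemma phase_pair_conj n p a : Cconj (phase_pair n p a) = Copp (phase_pair n p a).
Proof. unfold phase_pair. destruct (_ || _); C_ring. Qed.

Lemma phase_pair_shift n p a : (p < n)%nat -> (a < n)%nat ->
  phase_pair n p (a + n)%nat = Copp (Cconj (phase_pair n p a)).
Proof. intros Hp Ha. unfold phase_pair. nat_cases; simpl; try lia; C_ring. Qed.

Lemma Cre_csum_phase_pair n K p : (p < n)%nat ->
  Cre (csum (2 * n) (fun i => Cmul (Cconj (K i i)) (phase_pair n p i))) =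
  Cim (K p p) + Cim (K (p + n)%nat (p + n)%nat).
Proof.
  intros Hp. rewrite (csum_pair _ _ p (p + n)%nat) by
    (lia || (intros k _ Hkp Hkq; unfold phase_pair; nat_cases; try lia; simpl; C_ring)).
  unfold phase_pair. nat_cases; try lia. simpl.
  unfold Cadd, Cmul, Cconj, Ci, Cre, Cim. simpl. ring.
Qed.

(** * The diagonal of a skew-Hermitian Hamiltonian matrix *)

Lemma skew_Hamiltonian_diag n K p : skew_Hermitian n K -> Hamiltonian n K -> (p < n)%nat ->
  Cre (K p p) = 0 /\ K (p + n)%nat (p + n)%nat = Copp (Cconj (K p p)).
Proof.
  intros HKs HKh Hp. split.
  - specialize (HKs p p ltac:(lia) ltac:(lia)). unfold adj, mopp in HKs.
    destruct (K p p) as [x y]. injection HKs. unfold Cre. simpl. lra.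
  - specialize (HKh (p + n)%nat p ltac:(lia) ltac:(lia)). unfold adj in HKh.
    rewrite !mmul_Jmat_l in HKh by lia.
    destruct (Nat.ltb_spec (p + n) n), (Nat.ltb_spec p n); try lia.
    rewrite Nat.add_sub in HKh.
    transitivity (Cconj (Cconj (K (p + n)%nat (p + n)%nat))); [C_ring|].
    rewrite HKh. C_ring.
Qed.

Lemma skew_Hamiltonian_diag_eq0 n K : skew_Hermitian n K -> Hamiltonian n K ->
  (forall p, (p < n)%nat -> Cim (K p p) + Cim (K (p + n)%nat (p + n)%nat) = 0) ->
  forall j, (j < 2 * n)%nat -> K j j = C0.
Proof.
  intros HKs HKh Him.
  assert (Hpair : forall p, (p < n)%nat -> K p p = C0 /\ K (p + n)%nat (p + n)%nat = C0).
  { intros p Hp. destruct (skew_Hamiltonian_diag n K p HKs HKh Hp) as [Hre Hpn].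
    specialize (Him p Hp). rewrite Hpn in Him |- *.
    destruct (K p p) as [x y]. unfold Cre, Cim, Copp, Cconj, C0 in *. simpl in *.
    split; f_equal; lra. }
  intros j Hj. destruct (Nat.ltb_spec j n).
  - apply Hpair; auto.
  - replace j with (j - n + n)%nat by lia. apply Hpair. lia.
Qed.

Theorem lemma4p2 (n : nat) (A Z P : Mat) :
  Hamiltonian n A -> in_M n Z -> is_riem_grad n A Z P ->
  exists X, skew_Hermitian n X /\ Hamiltonian n X /\
    (forall j, (j < 2 * n)%nat -> X j j = C0) /\
    meq (2 * n) P (mmul (2 * n) Z X).
Proof.
  intros _ [HZ _] [G [HG [[K [HKs [HKh HPK]]] Horth]]].
  exists K. split; [|split; [|split]]; auto.
  apply skew_Hamiltonian_diag_eq0; auto. intros p Hp.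
  rewrite <- Cre_csum_phase_pair by exact Hp.
  apply (riem_grad_orth_diag n A Z P G); auto.
  - intros. apply phase_pair_conj.
  - intros. apply phase_pair_shift; auto.
Qed.
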